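(* Let $S$ be a memory system satisfying the Causality assumption. For all $n,m,v\ge1$: every unambiguous trace of $S(n,m,v)$ is sequentially consistent if and only if there is a witness $\Omega$ for $S(n,m,v)$ such that the graph $G(\Omega)(\tau)$ is acyclic for every unambiguous trace $\tau$ of $S(n,m,v)$.
   Context: Notation: $\mathbb{N}_n=\{1,\dots,n\}$, $\mathbb{W}_n=\{0,\dots,n\}$. Memory events $E(n,m,v)=\{R,W\}\times\mathbb{N}_n\times\mathbb{N}_m\times\mathbb{W}_v$; for $e=\langle a,b,c,d\rangle$, $op(e)=a$, $proc(e)=b$, $loc(e)=c$, $data(e)=d$; $0$ models the initial value of every location. A memory system is a family $S=(S(n,m,v))_{n,m,v\ge1}$, $S(n,m,v)$ a regular set of finite runs over an alphabet $E^a(n,m,v)\supseteq E(n,m,v)$ (other letters are internal events). The trace of a run is its subsequence of memory events; traces of $S(n,m,v)$ are traces of its runs. For a sequence $\tau$ of memory events with positions $1,\dots,|\tau|$: $P(\tau,i)=\{k: proc(\tau(k))=i\}$, $L(\tau,j)=\{k: loc(\tau(k))=j\}$, $L^w(\tau,j)=\{k\in L(\tau,j): op(\tau(k))=W\}$, $L^r(\tau,j)=\{k\in L(\tau,j): op(\tau(k))=R\}$. A trace $\tau$ is unambiguous if for every location $j$ and $x\in L^w(\tau,j)$, $data(\tau(x))\ne0$ and $data(\tau(x))\ne data(\tau(y))$ for all $y\in L^w(\tau,j)\setminus\{x\}$. Causality assumption: for all $n,m,v\ge1$, every trace $\tau$ of $S(n,m,v)$, every location $j$ and every $x\in L^r(\tau,j)$,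 either $data(\tau(x))=0$ or there is $y\in L^w(\tau,j)$ with $data(\tau(x))=data(\tau(y))$. Sequential consistency: $\tau$ is serial if for every position $u$, with $upto(\tau,u)=\{k\le u: op(\tau(k))=W,\ loc(\tau(k))=loc(\tau(u))\}$, $data(\tau(u))=0$ when $upto(\tau,u)=\emptyset$ and $data(\tau(u))=data(\tau(\max upto(\tau,u)))$ otherwise. $M(\tau,i)=\{\langle u,v\rangle: u,v\in P(\tau,i), u<v\}$. $\tau$ is sequentially consistent if some permutation $f$ of $\mathbb{N}_{|\tau|}$ satisfies (C1) $\langle u,v\rangle\in M(\tau,i)$ for some $i$ implies $f(u)<f(v)$, and (C2) $\tau_{f^{-1}(1)}\cdots\tau_{f^{-1}(|\tau|)}$ is serial. A witness $\Omega$ for $S(n,m,v)$ assigns to every trace $\tau$ of $S(n,m,v)$ and location $j$ a strict total order $\Omega(\tau,j)$ on $L^w(\tau,j)$. For unambiguous $\tau$, $\Omega^e(\tau,j)\subseteq L(\tau,j)^2$: $\langle x,y\rangle\in\Omega^e(\tau,j)$ iff (1) $data(\tau(x))=data(\tau(y))$, $op(\tau(x))=W$, $op(\tau(y))=R$; or (2) $data(\tau(x))=0$ and $data(\tau(y))\ne0$; or (3) there are $a,b\in L^w(\tau,j)$ with $\langle a,b\rangle\in\Omega(\tau,j)$, $data(\tau(a))=data(\tau(x))$, $data(\tau(b))=data(\tau(y))$. The constraint graph $G(\Omega)(\tau)$ is the directed graph with vertex set $\{1,\dots,|\tau|\}$ and edge set $\bigcup_{1\le i\le n}M(\tau,i)\cup\bigcup_{1\le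 j\le m}\Omega^e(\tau,j)$. *)

From Stdlib Require Import Relations.
From Stdlib Require List.
From mathcomp Require Import all_boot.
Set Implicit Arguments. Unset Strict Implicit. Unset Printing Implicit Defensive.

Inductive opk := R | W.

Record event := Ev { op : opk; proc : nat; loc : nat; data : nat }.

Definition is_write (e : event) : bool := if op e is W then true else false.

Definition in_E (n m v : nat) (e : event) : Prop :=
  1 <= proc e <= n /\ 1 <= loc e <= m /\ data e <= v.

Definition regular_lang (A : Type) (L : seq A -> Prop) : Prop :=
  exists (Q : finType) (q0 : Q) (d : Q -> A -> Q) (F : pred Q),
    forall w, L w <-> F (foldl d q0 w).

(* A memory system: for each n,m,v a finite set of internal letters
   (so E^a(n,m,v) = E(n,m,v) + internal letters), and a regular set of runs
   over E^a(n,m,v). *)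
Record memsys := MemSys {
  internal : nat -> nat -> nat -> finType;
  runs : forall n m v, seq (event + internal n m v) -> Prop;
  runs_events : forall n m v (r : seq (event + internal n m v)),
      runs r -> forall e, List.In (inl e) r -> in_E n m v e;
  runs_regular : forall n m v, regular_lang (@runs n m v)
}.

Definition trace (I : Type) (r : seq (event + I)) : seq event :=
  pmap (fun a => if a is inl e then Some e else None) r.

Definition trace_of (S : memsys) (n m v : nat) (tau : seq event) : Prop :=
  exists r, @runs S n m v r /\ trace r = tau.

Definition dflt_ev := Ev R 0 0 0.
Definition at_ (tau : seq event) (k : nat) : event := nth dflt_ev tau k.-1.
Definition pos (tau : seq event) (k : nat) : Prop := 1 <= k <= size tau.

Definition Pset (tau : seq event) (i k : nat) : Prop := pos tau k /\ proc (at_ tau k) = i.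
Definition Lset (tau : seq event) (j k : nat) : Prop := pos tau k /\ loc (at_ tau k) = j.
Definition Lw (tau : seq event) (j k : nat) : Prop := Lset tau j k /\ op (at_ tau k) = W.
Definition Lr (tau : seq event) (j k : nat) : Prop := Lset tau j k /\ op (at_ tau k) = R.

Definition unambiguous (tau : seq event) : Prop :=
  forall j x, Lw tau j x ->
    data (at_ tau x) <> 0 /\
    (forall y, Lw tau j y -> y <> x -> data (at_ tau x) <> data (at_ tau y)).

Definition causality (S : memsys) : Prop :=
  forall n m v, 1 <= n -> 1 <= m -> 1 <= v ->
  forall tau, trace_of S n m v tau ->
  forall j x, Lr tau j x ->
    data (at_ tau x) = 0 \/ exists y, Lw tau j y /\ data (at_ tau x) = data (at_ tau y).

Definition upto (tau : seq event) (u : nat) : seq nat :=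
  [seq k <- iota 1 u | is_write (at_ tau k) && (loc (at_ tau k) == loc (at_ tau u))].

Definition serial (tau : seq event) : Prop :=
  forall u, pos tau u ->
    data (at_ tau u) =
      (if upto tau u is [::] then 0 else data (at_ tau (\max_(k <- upto tau u) k))).

Definition Mrel (tau : seq event) (i u w : nat) : Prop :=
  Pset tau i u /\ Pset tau i w /\ u < w.

Definition perm_N (N : nat) (f g : nat -> nat) : Prop :=
  (forall u, 1 <= u <= N -> 1 <= f u <= N /\ g (f u) = u) /\
  (forall p, 1 <= p <= N -> 1 <= g p <= N /\ f (g p) = p).

Definition seq_consistent (tau : seq event) : Prop :=
  exists f g : nat -> nat, perm_N (size tau) f g /\
    (forall i u w, Mrel tau i u w -> f u < f w) /\
    serial [seq at_ tau (g p) | p <- iota 1 (size tau)].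

Definition strict_total_order (D : nat -> Prop) (Rl : nat -> nat -> Prop) : Prop :=
  (forall x y, Rl x y -> D x /\ D y) /\
  (forall x, ~ Rl x x) /\
  (forall x y z, Rl x y -> Rl y z -> Rl x z) /\
  (forall x y, D x -> D y -> x <> y -> Rl x y \/ Rl y x).

Definition witness (S : memsys) (n m v : nat)
  (Omega : seq event -> nat -> nat -> nat -> Prop) : Prop :=
  forall tau, trace_of S n m v tau ->
  forall j, 1 <= j <= m -> strict_total_order (Lw tau j) (Omega tau j).

Definition Omega_e (tau : seq event) (Om : nat -> nat -> Prop) (j x y : nat) : Prop :=
  Lset tau j x /\ Lset tau j y /\
  ( (data (at_ tau x) = data (at_ tau y) /\ op (at_ tau x) = W /\ op (at_ tau y) = R)
  \/ (data (at_ tau x) = 0 /\ data (at_ tau y) <> 0)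
  \/ (exists a b, Lw tau j a /\ Lw tau j b /\ Om a b /\
        data (at_ tau a) = data (at_ tau x) /\ data (at_ tau b) = data (at_ tau y)) ).

Definition Gedge (n m : nat) (Omega : seq event -> nat -> nat -> nat -> Prop)
  (tau : seq event) (x y : nat) : Prop :=
  pos tau x /\ pos tau y /\
  ((exists i, 1 <= i <= n /\ Mrel tau i x y) \/
   (exists j, 1 <= j <= m /\ Omega_e tau (Omega tau j) j x y)).

Definition acyclic (E : nat -> nat -> Prop) : Prop :=
  forall x, ~ clos_trans nat E x x.

(* If every unambiguous trace is sequentially consistent, rank the events of each
   trace by a serial reordering [f] and let Omega order the writes to each location
   by [f].  In a serial order every event returns the value of the [f]-latest write
   to its location ranked no later than itself (or 0 if there is none), and by
   unambiguity that value determines the write; hence every edge of the constraint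
   graph increases [f], and the graph is acyclic.
   Conversely, a linear extension of an acyclic constraint graph respects program
   order, and it is serial: by causality a read returns either 0, and then precedes
   every write to its location, or the value of a unique write [w], which it
   follows, while every other write to that location precedes [w] or follows the
   read according to Omega. *)

From Stdlib Require Import Relations.
From Stdlib Require List.
From mathcomp Require Import all_boot zify boolp.

Set Implicit Arguments.
Unset Strict Implicit.
Unset Printing Implicit Defensive.

Lemma is_writeP (e : event) : reflect (op e = W) (is_write e).
Proof. by case: e => [[]] /=; constructor. Qed.

Lemma In_trace (I : Type) (r : seq (event + I)) e :
  List.In e (trace r) -> List.In (inl e) r.
Proof. by elim: r => [|[a|a] r IH] //= => [[->|/IH]|/IH]; auto. Qed.

Lemma In_at tau u : pos tau u -> List.In (at_ tau u) tau.
Proof.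
rewrite /pos /at_ => u_pos; have : u.-1 < size tau by lia.
move: u.-1 => k; elim: tau k {u_pos} => // e tau IH [|k] /= k_lt.
  by left.
by right; apply: IH.
Qed.

Lemma trace_event_in_E S n m v tau u :
  trace_of S n m v tau -> pos tau u -> in_E n m v (at_ tau u).
Proof. by move=> [r [r_run <-]] /In_at/In_trace; apply: runs_events. Qed.

Definition permute (tau : seq event) (g : nat -> nat) : seq event :=
  [seq at_ tau (g p) | p <- iota 1 (size tau)].

Lemma size_permute tau g : size (permute tau g) = size tau.
Proof. by rewrite size_map size_iota. Qed.

Lemma at_permute tau g p : pos tau p -> at_ (permute tau g) p = at_ tau (g p).
Proof.
rewrite /pos /at_ => p_pos; rewrite (nth_map 0) ?size_iota ?nth_iota; try lia.
by congr (at_ tau (g _)); lia.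
Qed.

Lemma perm_N_inj N f g x y :
  perm_N N f g -> 1 <= x <= N -> 1 <= y <= N -> f x = f y -> x = y.
Proof. by move=> [f_inv _] /f_inv[_ gfx] /f_inv[_ gfy] fxy; rewrite -gfx fxy gfy. Qed.

Definition visible_write (tau : seq event) (f : nat -> nat) (y x : nat) : Prop :=
  [/\ pos tau x, is_write (at_ tau x), loc (at_ tau x) = loc (at_ tau y) & f x <= f y].

(* A write counts as reading from itself, so it always satisfies [reads_latest]. *)
Definition reads_latest (tau : seq event) (f : nat -> nat) (y : nat) : Prop :=
  (data (at_ tau y) = 0 /\ forall x, ~ visible_write tau f y x) \/
  (exists x, [/\ visible_write tau f y x,
                 forall x', visible_write tau f y x' -> f x' <= f x &
                 data (at_ tau y) = data (at_ tau x)]).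

Lemma bigmax_mem_seq (s : seq nat) : s != [::] -> \max_(k <- s) k \in s.
Proof.
elim: s => // a s IH _; rewrite big_cons inE.
case: s IH => [|b s] IH; first by rewrite big_nil maxn0 eqxx.
move/(_ isT): IH; set M := \max_(k <- _) k => M_in.
by rewrite /maxn; case: ltnP; rewrite ?eqxx ?M_in ?orbT.
Qed.

Lemma mem_upto tau u k : pos tau u ->
  reflect (visible_write tau id u k) (k \in upto tau u).
Proof.
rewrite /upto mem_filter mem_iota /visible_write /pos => u_pos.
apply: (iffP idP) => [/andP[/andP[k_w /eqP k_loc] k_in] | [/andP[k_gt0 _] -> -> k_le]].
  by split=> //; lia.
by rewrite eqxx /=; lia.
Qed.

Lemma reads_latest_id tau u : pos tau u ->
  reads_latest tau id u <->
  data (at_ tau u) =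
    (if upto tau u is [::] then 0 else data (at_ tau (\max_(k <- upto tau u) k))).
Proof.
move=> u_pos; case E: (upto tau u) => [|k0 s].
  have none x : ~ visible_write tau id u x by move/(mem_upto _ u_pos); rewrite E.
  by split=> [[[]//|[x [/none]]]|d0]; [|left].
rewrite -E; set M := \max_(k <- _) k.
have M_vis : visible_write tau id u M by apply/mem_upto/bigmax_mem_seq; rewrite ?E.
have M_max x : visible_write tau id u x -> x <= M.
  by move/(mem_upto _ u_pos) => x_in; apply: (leq_bigmax_seq x x_in).
split=> [[[_ /(_ M M_vis)]//|[x [x_vis x_max ->]]] | d_M]; last by right; exists M.
by have /eqP -> : x == M by rewrite eqn_leq M_max ?x_max.
Qed.

Lemma serial_reads_latest tau :
  serial tau <-> forall u, pos tau u -> reads_latest tau id u.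
Proof. by split=> ser u u_pos; apply/(reads_latest_id u_pos); apply: ser. Qed.

Section Reindex.
Variables (tau : seq event) (f g : nat -> nat).
Hypothesis fg : perm_N (size tau) f g.

Lemma visible_write_permute p k : pos tau p -> pos tau k ->
  visible_write (permute tau g) id p k <-> visible_write tau f (g p) (g k).
Proof.
move=> p_pos k_pos; have [[gp_pos fgp] [gk_pos fgk]] := (fg.2 p p_pos, fg.2 k k_pos).
rewrite /visible_write /= !at_permute // fgp fgk.
by split=> -[_ w l le]; split; rewrite // /pos size_permute.
Qed.

Lemma reads_latest_permute p : pos tau p ->
  reads_latest (permute tau g) id p <-> reads_latest tau f (g p).
Proof.
move=> p_pos.
have vis_pos k : visible_write (permute tau g) id p k -> pos tau k.
  by case; rewrite /pos size_permute.
have vis_tau x : visible_write tau f (g p) x -> pos tau (f x) /\ g (f x) = x.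
  by case=> /(fg.1 x).
rewrite /reads_latest at_permute //.
split=> [[[d0 none] | [k [k_vis k_max dk]]] | [[d0 none] | [x [x_vis x_max dx]]]].
- left; split=> // x x_vis; have [fx_pos gfx] := vis_tau x x_vis.
  by apply: (none (f x)); apply/(visible_write_permute p_pos fx_pos); rewrite gfx.
- have k_pos := vis_pos k k_vis; have fgk := (fg.2 k k_pos).2.
  right; exists (g k); split.
  + exact/(visible_write_permute p_pos k_pos).
  + move=> x' x'_vis; have [fx_pos gfx] := vis_tau x' x'_vis.
    by rewrite fgk; apply: k_max; apply/(visible_write_permute p_pos fx_pos); rewrite gfx.
  + by rewrite dk at_permute.
- left; split=> // k k_vis; have k_pos := vis_pos k k_vis.
  exact/(none (g k))/(visible_write_permute p_pos k_pos).
- have [fx_pos gfx] := vis_tau x x_vis.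
  right; exists (f x); split.
  + by apply/(visible_write_permute p_pos fx_pos); rewrite gfx.
  + move=> k k_vis; have k_pos := vis_pos k k_vis; have fgk := (fg.2 k k_pos).2.
    by rewrite -fgk; apply: x_max; apply/(visible_write_permute p_pos k_pos).
  + by rewrite at_permute // gfx.
Qed.

Lemma serial_permute :
  serial (permute tau g) <-> forall y, pos tau y -> reads_latest tau f y.
Proof.
rewrite serial_reads_latest; split=> reads y y_pos.
  have [fy_pos gfy] := fg.1 y y_pos.
  by rewrite -gfy; apply/reads_latest_permute/reads => //; rewrite /pos size_permute.
have p_pos : pos tau y by move: y_pos; rewrite /pos size_permute.
exact/(reads_latest_permute p_pos)/reads/(fg.2 y p_pos).1.
Qed.

End Reindex.

Lemma sub_count_lt (T : eqType) (a1 a2 : pred T) (s : seq T) z :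
  subpred a1 a2 -> z \in s -> a2 z -> ~~ a1 z -> count a1 s < count a2 s.
Proof.
move=> sub12; elim: s => // a s IH; rewrite inE => /predU1P[<- | z_in] a2z a1z /=.
  by rewrite a2z (negbTE a1z) add0n add1n ltnS; apply: sub_count.
have := IH z_in a2z a1z; case: (a1 a) (sub12 a) => [-> // | _]; case: (a2 a) => /=; lia.
Qed.

Lemma perm_N_index N (l : seq nat) : perm_eq l (iota 1 N) ->
  perm_N N (fun u => (index u l).+1) (fun p => nth 0 l p.-1).
Proof.
move=> l_perm; have l_uniq : uniq l by rewrite (perm_uniq l_perm) iota_uniq.
have l_size : size l = N by rewrite (perm_size l_perm) size_iota.
have l_mem x : (x \in l) = (1 <= x <= N) by rewrite (perm_mem l_perm) mem_iota add1n ltnS.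
split=> [u | p p_in].
  by rewrite -l_mem => u_in; rewrite /= nth_index //; move: u_in; rewrite -index_mem l_size.
have p_lt : p.-1 < size l by rewrite l_size; lia.
by rewrite -l_mem mem_nth // index_uniq //; split=> //; lia.
Qed.

Section LinearExtension.
Variables (N : nat) (E : nat -> nat -> Prop).
Hypothesis E_dom : forall x y, E x y -> 1 <= x <= N /\ 1 <= y <= N.
Hypothesis E_acyclic : acyclic E.

(* Acyclicity makes the number of ancestors grow strictly along edges, so sorting
   by it yields a linear extension. *)
Let ancestors u := count (fun w => `[< clos_trans nat E w u >]) (iota 1 N).

Lemma ancestors_lt x y : E x y -> ancestors x < ancestors y.
Proof.
move=> xy; apply: (@sub_count_lt _ _ _ _ x).
- by move=> w /asboolP wx; apply/asboolP; apply: t_trans wx (t_step _ _ _ _ xy).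
- by rewrite mem_iota; have := E_dom xy; lia.
- exact/asboolP/t_step.
- exact/asboolPn/E_acyclic.
Qed.

Lemma acyclic_linear_extension :
  exists f g, perm_N N f g /\ forall x y, E x y -> f x < f y.
Proof.
pose le_anc := fun a b => ancestors a <= ancestors b.
pose l := sort le_anc (iota 1 N).
have l_sorted : sorted le_anc l by apply: sort_sorted => a b; apply: leq_total.
have l_mem x : (x \in l) = (1 <= x <= N) by rewrite mem_sort mem_iota add1n ltnS.
exists (fun u => (index u l).+1), (fun p => nth 0 l p.-1).
split=> [|x y xy]; first by apply: perm_N_index; rewrite perm_sort.
have [x_in y_in] := E_dom xy; rewrite ltnS; have := ancestors_lt xy.
apply: contraLR; rewrite -!leqNgt; apply: (sorted_leq_index _ _ l_sorted).
- by move=> a b c; apply: leq_trans.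
- by move=> a; apply: leqnn.
- by rewrite l_mem.
- by rewrite l_mem.
Qed.

End LinearExtension.

Definition rank_order (D : nat -> Prop) (f : nat -> nat) (a b : nat) : Prop :=
  D a /\ D b /\ f a < f b.

Lemma rank_order_total D f :
  (forall x y, D x -> D y -> f x = f y -> x = y) ->
  strict_total_order D (rank_order D f).
Proof.
move=> f_inj; split; first by move=> x y [Dx [Dy _]].
split; first by move=> x [_ []]; rewrite ltnn.
split; first by move=> x y z [Dx [_ xy]] [_ [Dz yz]]; split=> //; split=> //; lia.
move=> x y Dx Dy x_ne_y; have : f x != f y by apply/eqP => /f_inj; auto.
by rewrite neq_ltn => /orP[] lt; [left | right].
Qed.

Lemma acyclic_of_rank (E : nat -> nat -> Prop) (f : nat -> nat) :
  (forall x y, E x y -> f x < f y) -> acyclic E.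
Proof.
move=> f_mono x; suff rank_lt y : clos_trans nat E x y -> f x < f y.
  by move/rank_lt; rewrite ltnn.
by elim=> [a b /f_mono | a b c _ ab _ bc] //; apply: ltn_trans ab bc.
Qed.

Lemma write_nonzero tau x : unambiguous tau -> pos tau x ->
  is_write (at_ tau x) -> data (at_ tau x) <> 0.
Proof.
by move=> unamb x_pos /is_writeP x_w; case: (unamb _ x (conj (conj x_pos erefl) x_w)).
Qed.

Lemma write_of_data tau j x y : unambiguous tau -> Lw tau j x -> Lw tau j y ->
  data (at_ tau x) = data (at_ tau y) -> x = y.
Proof.
move=> unamb x_Lw y_Lw dxy; case: (eqVneq x y) => // /eqP x_ne_y.
by case: (unamb j x x_Lw) => _ /(_ y y_Lw (nesym x_ne_y)).
Qed.

Definition causal (tau : seq event) : Prop :=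
  forall j x, Lr tau j x ->
    data (at_ tau x) = 0 \/ exists y, Lw tau j y /\ data (at_ tau x) = data (at_ tau y).

Section ConstraintsToSerial.
Variables (tau : seq event) (j : nat) (Om : nat -> nat -> Prop) (f : nat -> nat).
Hypothesis tau_unamb : unambiguous tau.
Hypothesis tau_causal : causal tau.
Hypothesis Om_total : strict_total_order (Lw tau j) Om.
Hypothesis f_mono : forall x y, Omega_e tau Om j x y -> f x < f y.

Lemma reads_latest_of_constraints y :
  pos tau y -> loc (at_ tau y) = j -> reads_latest tau f y.
Proof.
move=> y_pos y_loc.
have Lset_loc x : pos tau x -> loc (at_ tau x) = loc (at_ tau y) -> Lset tau j x.
  by move=> x_pos x_loc; split; rewrite // x_loc.
have y_Lset : Lset tau j y by [].
case y_op: (op (at_ tau y)); last first.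
  right; exists y; split=> //; first by split=> //; apply/is_writeP.
  by move=> x [].
have [y_0 | [w [w_Lw d_yw]]] := tau_causal (conj y_Lset y_op).
  left; split=> // x [x_pos x_w x_loc le_xy].
  suff : f y < f x by lia.
  apply: f_mono; split=> //; split; first exact: Lset_loc.
  by right; left; split=> //; apply: write_nonzero.
have [w_Lset w_op] := w_Lw; have [w_pos w_loc] := w_Lset.
have lt_wy : f w < f y.
  by apply: f_mono; split=> //; split=> //; left; rewrite d_yw; do 2 split.
right; exists w; split=> //; first by split=> //; [apply/is_writeP | rewrite w_loc | apply: ltnW].
move=> x [x_pos x_w x_loc le_xy].
have x_Lw : Lw tau j x by split; [apply: Lset_loc | apply/is_writeP].
case: (eqVneq x w) => [-> // | /eqP x_ne_w].
have [_ [_ [_ Om_tot]]] := Om_total.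
case: (Om_tot w x w_Lw x_Lw (nesym x_ne_w)) => [Om_wx | Om_xw].
  suff : f y < f x by lia.
  apply: f_mono; split=> //; split; first exact: Lset_loc.
  by right; right; exists w, x.
suff : f x < f w by lia.
apply: f_mono; split; first exact: Lset_loc.
by split=> //; right; right; exists x, w.
Qed.

End ConstraintsToSerial.

Section SerialToConstraints.
Variables (tau : seq event) (f : nat -> nat) (j : nat) (Om : nat -> nat -> Prop).
Hypothesis tau_unamb : unambiguous tau.
Hypothesis f_inj : forall x y, pos tau x -> pos tau y -> f x = f y -> x = y.
Hypothesis f_reads : forall y, pos tau y -> reads_latest tau f y.
Hypothesis Om_rank : forall a b, Om a b -> f a < f b.

Lemma reads_latest_source y a : Lw tau j a -> pos tau y -> loc (at_ tau y) = j ->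
  data (at_ tau y) = data (at_ tau a) ->
  f a <= f y /\ forall x, visible_write tau f y x -> f x <= f a.
Proof.
move=> a_Lw y_pos y_loc d_ya; have [[a_pos a_loc] /is_writeP a_w] := a_Lw.
case: (f_reads y_pos) => [[y_0 _] | [x [[x_pos x_w x_loc le_xy] x_max d_yx]]].
  by case: (write_nonzero tau_unamb a_pos a_w); rewrite -d_ya.
have x_Lw : Lw tau j x by split; [split; rewrite // x_loc | apply/is_writeP].
by rewrite -(write_of_data tau_unamb x_Lw a_Lw) // -d_yx.
Qed.

Lemma rank_increasing_Omega_e x y : Omega_e tau Om j x y -> f x < f y.
Proof.
move=> [[x_pos x_loc] [[y_pos y_loc] edge]].
case: edge => [[d_xy [x_op y_op]] | [[x_0 y_n0] | [a [b [a_Lw [b_Lw [ab [d_ax d_by]]]]]]]].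
- have x_Lw : Lw tau j x by split.
  have [le_xy _] := reads_latest_source x_Lw y_pos y_loc (esym d_xy).
  rewrite ltn_neqAle le_xy andbT; apply/eqP => /(f_inj x_pos y_pos) x_eq_y.
  by move: x_op; rewrite x_eq_y y_op.
- case: (f_reads x_pos) => [[_ none_x] | [k [[k_pos k_w _ _] _ d_xk]]]; last first.
    by case: (write_nonzero tau_unamb k_pos k_w); rewrite -d_xk.
  case: (f_reads y_pos) => [[y_0 _] // | [k [[k_pos k_w k_loc le_ky] _ _]]].
  rewrite ltnNge; apply/negP => le_yx; apply: (none_x k).
  by split=> //; [rewrite k_loc y_loc x_loc | apply: leq_trans le_ky le_yx].
- have [le_ax max_x] := reads_latest_source a_Lw x_pos x_loc (esym d_ax).
  have [le_by _] := reads_latest_source b_Lw y_pos y_loc (esym d_by).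
  have [[b_pos b_loc] /is_writeP b_w] := b_Lw.
  rewrite ltnNge; apply/negP => le_yx.
  suff : f b <= f a by have := Om_rank ab; lia.
  by apply: max_x; split=> //; [rewrite b_loc x_loc | apply: leq_trans le_by le_yx].
Qed.

End SerialToConstraints.

Definition sc_rank (tau : seq event) (f : nat -> nat) : Prop :=
  exists g, perm_N (size tau) f g /\ (forall i u w, Mrel tau i u w -> f u < f w) /\
            serial (permute tau g).

(* A witness must also order the writes of traces that are not sequentially
   consistent; any injective ranking, such as the identity, does. *)
Lemma exists_injective_sc_rank tau : exists f,
  (forall x y, pos tau x -> pos tau y -> f x = f y -> x = y) /\
  (seq_consistent tau -> sc_rank tau f).
Proof.
case: (EM (seq_consistent tau)) => [[f [g [fg [f_po f_serial]]]] | not_sc].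
  by exists f; split=> [x y | _]; [apply: perm_N_inj fg | exists g].
by exists id; split=> // [x y _ _ // | /not_sc].
Qed.

Lemma Gedge_of_Mrel S n m v Omega tau i x y :
  trace_of S n m v tau -> Mrel tau i x y -> Gedge n m Omega tau x y.
Proof.
move=> tau_tr xy; have [[x_pos x_proc] [[y_pos _] _]] := xy.
split=> //; split=> //; left; exists i; split=> //.
by have [proc_x _] := trace_event_in_E tau_tr x_pos; rewrite -x_proc.
Qed.

Lemma Gedge_of_Omega_e S n m v Omega tau j x y :
  trace_of S n m v tau -> Omega_e tau (Omega tau j) j x y -> Gedge n m Omega tau x y.
Proof.
move=> tau_tr xy; have [[x_pos x_loc] [[y_pos _] _]] := xy.
split=> //; split=> //; right; exists j; split=> //.
by have [_ [loc_x _]] := trace_event_in_E tau_tr x_pos; rewrite -x_loc.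
Qed.

Lemma Gedge_rank_increasing n m Omega tau (f : nat -> nat) x y :
  unambiguous tau -> (forall x y, pos tau x -> pos tau y -> f x = f y -> x = y) ->
  (forall y, pos tau y -> reads_latest tau f y) ->
  (forall i u w, Mrel tau i u w -> f u < f w) ->
  (forall j a b, Omega tau j a b -> f a < f b) ->
  Gedge n m Omega tau x y -> f x < f y.
Proof.
move=> tau_unamb f_inj f_reads f_po Omega_rank [_ [_ [[i [_ xy]] | [j [_ xy]]]]].
  exact: f_po xy.
exact: (rank_increasing_Omega_e tau_unamb f_inj f_reads (Omega_rank j) xy).
Qed.

Theorem theorem5p3 (S : memsys) (hC : causality S) (n m v : nat)
  (hn : 1 <= n) (hm : 1 <= m) (hv : 1 <= v) :
  (forall tau, trace_of S n m v tau -> unambiguous tau -> seq_consistent tau) <->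
  (exists Omega, witness S n m v Omega /\
     forall tau, trace_of S n m v tau -> unambiguous tau ->
       acyclic (Gedge n m Omega tau)).
Proof.
split=> [sc | [Omega [Omega_wit Omega_acyc]] tau tau_tr tau_unamb].
  have [rank rankP] := choice exists_injective_sc_rank.
  exists (fun tau j => rank_order (Lw tau j) (rank tau)).
  split=> [tau _ j _ | tau tau_tr tau_unamb].
    have [rank_inj _] := rankP tau.
    by apply: rank_order_total => x y [[x_pos _] _] [[y_pos _] _]; apply: rank_inj.
  have [rank_inj /(_ (sc tau tau_tr tau_unamb)) [g [fg [rank_po rank_serial]]]] := rankP tau.
  apply: (acyclic_of_rank (f := rank tau)) => x y.
  apply: Gedge_rank_increasing => //; first exact/(serial_permute fg).
  by move=> j a b [_ []].
have Gedge_pos x y : Gedge n m Omega tau x y -> 1 <= x <= size tau /\ 1 <= y <= size tau.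
  by case=> x_pos [y_pos _].
have [f [g [fg f_mono]]] :=
  acyclic_linear_extension Gedge_pos (Omega_acyc tau tau_tr tau_unamb).
exists f, g; split=> //; split=> [i u w uw | ].
  by apply: f_mono; apply: Gedge_of_Mrel tau_tr uw.
apply/(serial_permute fg) => y y_pos; have [_ [y_loc _]] := trace_event_in_E tau_tr y_pos.
apply: (reads_latest_of_constraints tau_unamb _ (Omega_wit tau tau_tr _ y_loc)) => //.
  exact: (hC n m v hn hm hv tau tau_tr).
by move=> x z xz; apply: f_mono; apply: Gedge_of_Omega_e tau_tr xz.
Qed.
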